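(* Let $ER_{min}\le ER_{max}$ be fixed memory addresses and $ER=[ER_{min},ER_{max}]$. For every execution trace (in the sense described in the context), if the trace satisfies the hardware-model formulas (HM1)–(HM6) together with $$\text{(L10)}\quad \mathbf{G}\{\neg reset \land (PC\in ER)\land \neg\mathbf{X}(PC\in ER)\rightarrow (PC=ER_{max})\lor \mathbf{X}(reset)\},$$ $$\text{(L11)}\quad \mathbf{G}\{\neg reset \land \neg(PC\in ER)\land \mathbf{X}(PC\in ER)\rightarrow \mathbf{X}(PC=ER_{min})\lor \mathbf{X}(reset)\},$$ $$\text{(L12)}\quad \mathbf{G}\{(PC\in ER)\land (irq\lor DMA_{en})\rightarrow reset\},$$ then it satisfies $$\mathbf{G}\{(PC\in ER)\rightarrow [(PC\in ER)\land\neg irq\land\neg DMA_{en}]\ \mathbf{W}\ [(PC=ER_{max})\lor reset]\}\ \land\ \mathbf{G}\{\neg reset\land\neg(PC\in ER)\land \mathbf{X}(PC\in ER)\rightarrow \mathbf{X}(PC=ER_{min})\lor\mathbf{X}(reset)\}.$$ That is, the conjunction of (HM1)–(HM6), (L10), (L11), (L12) implies the last formula in Linear Temporal Logic.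
   Context: Model of a low-end microcontroller (MCU): execution is a discrete sequence of MCU states (one per clock cycle), and the following signals are observed at each state: the program counter $PC$ (an address); $R_{en}$ and $W_{en}$ (1-bit CPU memory read/write enable); $D_{addr}$ (address of the CPU memory access); $DMA_{en}$ (1-bit, DMA active) and $DMA_{addr}$ (address accessed by DMA); $irq$ (1-bit, an interrupt is happening); $reset$ (1-bit, MCU reset). For a contiguous memory region $M=[M_{min},M_{max}]$, ''$a\in M$'' means $M_{min}\le a\le M_{max}$. Execution is also modeled by a relation ${\bf X}(s)\leftarrow EXEC(s,i)$ (''the next state is produced by executing instruction $i$ in the current state $s$'') and by state-property sets $READ_M, WRITE_M, DMA^R_M, DMA^W_M, IRQ, RESET$ (states produced by a CPU read from $M$, a CPU write to $M$, a DMA read/write of $M$, states where an interrupt / a reset is triggered). LTL operators over infinite traces: $\mathbf{X}\phi$ ($\phi$ holds at the next state), $\mathbf{G}\phi$ ($\phi$ holds at all current and future states), $\phi\,\mathbf{U}\,\psi$ ($\psi$ holds at some current/future state and $\phi$ holds at all states before it), $\phi\,\mathbf{W}\,\psi\equiv(\phi\,\mathbf{U}\,\psi)\lor\mathbf{G}\phi$, $\phi\,\mathbf{B}\,\psi\equiv\neg(\neg\phi\,\mathbf{U}\,\psi)$. Hardware model formulas (HM1)–(HM6), assumed for every contiguous region $M$: (HM1) $\mathbf{G}\{[\mathbf{X}(s)\leftarrow EXEC(s,i_k)\land i_k\in M]\rightarrow (PC\in M)\}$; (HM2) $\mathbf{G}\{\mathbf{X}(s)\in READ_M\rightarrow (R_{en}\land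 D_{addr}\in M)\}$; (HM3) $\mathbf{G}\{\mathbf{X}(s)\in WRITE_M\rightarrow (W_{en}\land D_{addr}\in M)\}$; (HM4) $\mathbf{G}\{(\mathbf{X}(s)\in DMA^R_M\lor \mathbf{X}(s)\in DMA^W_M)\rightarrow (DMA_{en}\land DMA_{addr}\in M)\}$; (HM5) $\mathbf{G}\{s\in IRQ\leftrightarrow irq\}$; (HM6) $\mathbf{G}\{s\in RESET\leftrightarrow reset\}$. *)

From Stdlib Require Import Arith.

Record signals : Type := mkSignals {
  PC : nat; R_en : bool; W_en : bool; D_addr : nat;
  DMA_en : bool; DMA_addr : nat; irq : bool; reset : bool }.

Definition region : Type := (nat * nat)%type.
Definition in_region (a : nat) (M : region) : Prop := fst M <= a <= snd M.

(* LTL over the positions of a fixed infinite trace: a formula is the set of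
   positions (suffix start indices) at which it holds. *)
Definition ltl := nat -> Prop.
Definition Gl (p : ltl) : ltl := fun i => forall j, i <= j -> p j.
Definition Xl (p : ltl) : ltl := fun i => p (S i).
Definition Ul (p q : ltl) : ltl :=
  fun i => exists k, i <= k /\ q k /\ forall j, i <= j -> j < k -> p j.
Definition Wl (p q : ltl) : ltl := fun i => Ul p q i \/ Gl p i.
Definition Bl (p q : ltl) : ltl := fun i => ~ Ul (fun j => ~ p j) q i.
Definition Andl (p q : ltl) : ltl := fun i => p i /\ q i.
Definition Orl (p q : ltl) : ltl := fun i => p i \/ q i.
Definition Impl (p q : ltl) : ltl := fun i => p i -> q i.
Definition Notl (p : ltl) : ltl := fun i => ~ p i.

Section Model.
Variables (St Instr : Type).
Variable sig : St -> signals.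
Variable instr_addr : Instr -> nat.
Variable EXEC : St -> Instr -> St -> Prop.
Variables READ WRITE DMA_R DMA_W : region -> St -> Prop.
Variables IRQ RESET : St -> Prop.
Variable tr : nat -> St.

Definition a_pc_in (M : region) : ltl := fun i => in_region (PC (sig (tr i))) M.
Definition a_pc_eq (a : nat) : ltl := fun i => PC (sig (tr i)) = a.
Definition a_irq : ltl := fun i => irq (sig (tr i)) = true.
Definition a_dma : ltl := fun i => DMA_en (sig (tr i)) = true.
Definition a_reset : ltl := fun i => reset (sig (tr i)) = true.

Definition HM1 : ltl := Gl (fun i => forall (M : region) (ik : Instr),
  EXEC (tr i) ik (tr (S i)) /\ in_region (instr_addr ik) M -> a_pc_in M i).
Definition HM2 : ltl := Gl (fun i => forall M : region,
  READ M (tr (S i)) -> R_en (sig (tr i)) = true /\ in_region (D_addr (sig (tr i))) M).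
Definition HM3 : ltl := Gl (fun i => forall M : region,
  WRITE M (tr (S i)) -> W_en (sig (tr i)) = true /\ in_region (D_addr (sig (tr i))) M).
Definition HM4 : ltl := Gl (fun i => forall M : region,
  DMA_R M (tr (S i)) \/ DMA_W M (tr (S i)) ->
  DMA_en (sig (tr i)) = true /\ in_region (DMA_addr (sig (tr i))) M).
Definition HM5 : ltl := Gl (fun i => IRQ (tr i) <-> a_irq i).
Definition HM6 : ltl := Gl (fun i => RESET (tr i) <-> a_reset i).

Variables ER_min ER_max : nat.
Definition ER : region := (ER_min, ER_max).

Definition L10 : ltl := Gl (Impl
  (Andl (Andl (Notl a_reset) (a_pc_in ER)) (Notl (Xl (a_pc_in ER))))
  (Orl (a_pc_eq ER_max) (Xl a_reset))).
Definition L11 : ltl := Gl (Impl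
  (Andl (Andl (Notl a_reset) (Notl (a_pc_in ER))) (Xl (a_pc_in ER)))
  (Orl (Xl (a_pc_eq ER_min)) (Xl a_reset))).
Definition L12 : ltl := Gl (Impl
  (Andl (a_pc_in ER) (Orl a_irq a_dma)) a_reset).

Definition goal_formula : ltl := Andl
  (Gl (Impl (a_pc_in ER)
      (Wl (Andl (Andl (a_pc_in ER) (Notl a_irq)) (Notl a_dma))
          (Orl (a_pc_eq ER_max) a_reset))))
  (Gl (Impl
      (Andl (Andl (Notl a_reset) (Notl (a_pc_in ER))) (Xl (a_pc_in ER)))
      (Orl (Xl (a_pc_eq ER_min)) (Xl a_reset)))).
End Model.

From Stdlib Require Import Arith Lia Wf_nat Classical.

(* For the first, (L10) says that, as long as neither [PC = ER_max] nor [reset] holds,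
   the PC cannot leave ER without a reset at the next state; hence [PC \in ER] persists
   until the first such exit point, and (L12) turns "inside ER and no reset" into
   "no interrupt and no DMA". *)

Section WeakUntil.
Variables p q : ltl.

Lemma Gl_step_invariant i :
  Gl (Impl (Andl p (Notl q)) (Xl (Orl p q))) i -> p i ->
  forall j, i <= j -> (forall m, i <= m <= j -> ~ q m) -> p j.
Proof.
  intros Hstep Hp j Hij; induction Hij as [|j Hij IH]; intros Hnq; [exact Hp|].
  assert (Hpj : p j) by (apply IH; intros m Hm; apply Hnq; lia).
  destruct (Hstep j Hij (conj Hpj (Hnq j ltac:(lia)))) as [HpS|HqS]; [exact HpS|].
  exfalso; exact (Hnq (S j) ltac:(lia) HqS).
Qed.

Lemma Gl_step_Wl i :
  Gl (Impl (Andl p (Notl q)) (Xl (Orl p q))) i ->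
  Gl (Impl p (Wl (Andl p (Notl q)) q)) i.
Proof.
  intros Hstep i' Hi' Hp.
  assert (Hinv := Gl_step_invariant i' (fun j Hj => Hstep j ltac:(lia)) Hp).
  destruct (classic (exists k, i' <= k /\ q k)) as [Hex|Hnone].
  - destruct (dec_inh_nat_subset_has_unique_least_element _
                (fun n => classic (i' <= n /\ q n)) Hex)
      as [k [[[Hk Hqk] Hleast] _]].
    assert (Hnq : forall m, i' <= m < k -> ~ q m).
    { intros m Hm Hqm; specialize (Hleast m (conj (proj1 Hm) Hqm)); lia. }
    left; exists k; split; [exact Hk|]; split; [exact Hqk|].
    intros j Hj Hjk; split; [|apply Hnq; lia].
    apply Hinv; [exact Hj|]; intros m Hm; apply Hnq; lia.
  - assert (Hnq : forall m, i' <= m -> ~ q m) by (intros m Hm Hqm; apply Hnone; eauto).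
    right; intros j Hj; split; [|exact (Hnq j Hj)].
    apply Hinv; [exact Hj|]; intros m Hm; apply Hnq; lia.
Qed.

Lemma Wl_mono (p' : ltl) i :
  (forall j, p j -> p' j) -> Wl p q i -> Wl p' q i.
Proof.
  intros Hpp' [[k [Hk [Hqk Hp]]] | HG].
  - left; exists k; eauto.
  - right; intros j Hj; exact (Hpp' j (HG j Hj)).
Qed.

End WeakUntil.

Section ExecutableRegion.
Variables (St : Type) (sig : St -> signals) (tr : nat -> St) (ER_min ER_max : nat).

Local Notation in_ER := (a_pc_in St sig tr (ER ER_min ER_max)).
Local Notation exit_ER := (Orl (a_pc_eq St sig tr ER_max) (a_reset St sig tr)).

Lemma L10_step :
  L10 St sig tr ER_min ER_max 0 ->
  Gl (Impl (Andl in_ER (Notl exit_ER)) (Xl (Orl in_ER exit_ER))) 0.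
Proof.
  intros H10 j Hj [Hin Hnexit].
  destruct (classic (in_ER (S j))) as [HinS|HoutS]; [left; exact HinS|right].
  destruct (H10 j Hj) as [Hmax|HresetS].
  - split; [split|]; [intro Hr; apply Hnexit; right; exact Hr | exact Hin | exact HoutS].
  - exfalso; apply Hnexit; left; exact Hmax.
  - right; exact HresetS.
Qed.

Lemma L12_quiet j :
  L12 St sig tr ER_min ER_max 0 ->
  Andl in_ER (Notl exit_ER) j ->
  Andl (Andl in_ER (Notl (a_irq St sig tr))) (Notl (a_dma St sig tr)) j.
Proof.
  intros H12 [Hin Hnexit].
  assert (Hactive : ~ (a_irq St sig tr j \/ a_dma St sig tr j)).
  { intros Hid; apply Hnexit; right; exact (H12 j (Nat.le_0_l j) (conj Hin Hid)). }
  split; [split|]; [exact Hin | intro Hi; apply Hactive; auto | intro Hd; apply Hactive; auto].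
Qed.

End ExecutableRegion.

Theorem theorem1 (St Instr : Type) (sig : St -> signals) (instr_addr : Instr -> nat)
  (EXEC : St -> Instr -> St -> Prop) (READ WRITE DMA_R DMA_W : region -> St -> Prop)
  (IRQ RESET : St -> Prop) (ER_min ER_max : nat) (tr : nat -> St) :
  ER_min <= ER_max ->
  HM1 St Instr sig instr_addr EXEC tr 0 ->
  HM2 St sig READ tr 0 ->
  HM3 St sig WRITE tr 0 ->
  HM4 St sig DMA_R DMA_W tr 0 ->
  HM5 St sig IRQ tr 0 ->
  HM6 St sig RESET tr 0 ->
  L10 St sig tr ER_min ER_max 0 ->
  L11 St sig tr ER_min ER_max 0 ->
  L12 St sig tr ER_min ER_max 0 ->
  goal_formula St sig tr ER_min ER_max 0.
Proof.
  intros _ _ _ _ _ _ _ H10 H11 H12.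
  split; [|exact H11].
  intros i Hi Hin.
  apply Wl_mono with (p := Andl (a_pc_in St sig tr (ER ER_min ER_max))
                                (Notl (Orl (a_pc_eq St sig tr ER_max) (a_reset St sig tr)))).
  - intros j; exact (L12_quiet St sig tr ER_min ER_max j H12).
  - exact (Gl_step_Wl _ _ 0 (L10_step St sig tr ER_min ER_max H10) i Hi Hin).
Qed.
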